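(* Every prime number that is antipalindromic in base $3$ can be written as $6k+1$ for some $k\in\mathbb N$.
   Context: For an integer $b\ge 2$, every natural number $m$ has a unique base-$b$ expansion $m=a_nb^n+\dots+a_1b+a_0$ with $a_0,\dots,a_n\in\{0,1,\dots,b-1\}$ and $a_n\neq 0$. The number $m$ is antipalindromic in base $b$ if $a_j=b-1-a_{n-j}$ for all $j\in\{0,1,\dots,n\}$. $\mathbb N$ denotes the positive integers. *)

From mathcomp Require Import all_boot.
Set Implicit Arguments. Unset Strict Implicit. Unset Printing Implicit Defensive.

(* Base-b digits of m, least significant first: [a_0; a_1; ...; a_n], a_n <> 0.
   digits b 0 = [::]. Uses fuel m (enough since m / b < m for b >= 2, m > 0). *)
Fixpoint digits_aux (b fuel m : nat) : seq nat :=
  match fuel with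
  | 0 => [::]
  | fuel'.+1 => if m == 0 then [::] else (m %% b) :: digits_aux b fuel' (m %/ b)
  end.

Definition digits (b m : nat) : seq nat := digits_aux b m m.

Definition antipalindromic (b m : nat) : Prop :=
  let d := digits b m in
  forall j, j < size d -> nth 0 d j = b.-1 - nth 0 d ((size d).-1 - j).

From mathcomp Require Import all_boot zify.

(* The last base-3 digit a_0 = p mod 3 of an antipalindromic p equals 2 - a_n
   with a_n <> 0, so p mod 3 is 0 or 1.  It cannot be 0, since the only prime
   multiple of 3 is 3 = (10)_3, which is not antipalindromic.  Hence p = 1 mod 3,
   and p is odd because 2 = 2 mod 3, so p = 1 mod 6 with p > 1. *)

Lemma nth_digits0 b m : nth 0 (digits b m) 0 = m %% b.
Proof. by case: m => [|m]; rewrite ?mod0n. Qed.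

Lemma last_digits_aux_neq0 b f m :
  1 < b -> 0 < m <= f -> last 0 (digits_aux b f m) != 0.
Proof.
move=> b_gt1; elim: f m => [|f IHf] m /andP[m_gt0 m_le]; first by lia.
rewrite /= ifN; last by rewrite -lt0n.
have [q0 | q_gt0] := posnP (m %/ b).
  have m_lt_b : m < b by rewrite ltnNge -divn_gt0 ?q0 // ltnW.
  by rewrite q0 modn_small //; case: f {IHf m_le} => [|f] /=; rewrite -lt0n.
have : last 0 (digits_aux b f (m %/ b)) != 0.
  by apply: IHf; have := ltn_Pdiv b_gt1 m_gt0; lia.
by case: (digits_aux b f (m %/ b)).
Qed.

Lemma last_digits_neq0 b m : 1 < b -> 0 < m -> last 0 (digits b m) != 0.
Proof. by move=> b_gt1 m_gt0; apply: last_digits_aux_neq0; rewrite ?m_gt0 /=. Qed.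

Lemma antipalindromic_modn_lt b m :
  1 < b -> 0 < m -> antipalindromic b m -> m %% b < b.-1.
Proof.
move=> b_gt1 m_gt0 anti_m.
have last_neq0 : last 0 (digits b m) != 0 by exact: last_digits_neq0.
have size_gt0 : 0 < size (digits b m) by case: (digits b m) last_neq0.
have := anti_m 0 size_gt0.
rewrite nth_digits0 subn0 nth_last => ->.
by move: last_neq0; lia.
Qed.

Lemma not_antipalindromic_3_3 : ~ antipalindromic 3 3.
Proof. by move/(_ 0 isT). Qed.

Theorem mainTheorem9 (p : nat) :
  prime p -> antipalindromic 3 p -> exists2 k : nat, 0 < k & p = 6 * k + 1.
Proof.
move=> p_pr anti_p.
have p_gt1 := prime_gt1 p_pr.
have p_mod3 : p %% 3 = 1.
  have := antipalindromic_modn_lt 3 p isT (ltnW p_gt1) anti_p.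
  case: (posnP (p %% 3)) => [p_mod0 _ | ]; last by lia.
  have p_eq3 : 3 = p.
    by apply/eqP; rewrite -(dvdn_prime2 (isT : prime 3) p_pr) /dvdn p_mod0.
  by rewrite -p_eq3 in anti_p; case: not_antipalindromic_3_3.
have [p_eq2 | p_odd] := even_prime p_pr; first by rewrite p_eq2 in p_mod3.
have p_mod2 : p %% 2 = 1 by rewrite modn2 p_odd.
by exists (p %/ 6); lia.
Qed.
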